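(* Let $Q$ be a non-degenerate convex quadrangle of perimeter $2$. Then its dual quadrangle $Q^\circ$ is also convex.
   Context: Identify $\mathbb{R}^2$ with $\mathbb{C}$. A quadrangle $Q=ABCD$ is an ordered 4-tuple of points $A,B,C,D\in\mathbb{C}$: $A$ is the first vertex and the order $A\to B\to C\to D\to A$ is the direction of traversal. Its edge vectors are $z_1=B-A$, $z_2=C-B$, $z_3=D-C$, $z_4=A-D$, so $z_1+z_2+z_3+z_4=0$; its perimeter is $|z_1|+|z_2|+|z_3|+|z_4|$. $Q$ is non-degenerate if each pair of consecutive edge vectors $(z_1,z_2),(z_2,z_3),(z_3,z_4),(z_4,z_1)$ consists of nonzero, non-collinear vectors. A non-degenerate quadrangle is self-intersecting if one of the pairs of opposite edges (segments $AB$ and $CD$, or $BC$ and $DA$) intersect; it is convex if it is not self-intersecting and all its interior angles are less than $\pi$; it is non-convex if it is neither self-intersecting nor convex. Associated plane: for a non-degenerate $Q$ of perimeter $2$, choose $u_1,\dots,u_4\in\mathbb{C}$ with $u_k^2=z_k$, where $u_1$ is an arbitrary square root of $z_1$ and for $k=1,2,3$ the sign of $u_{k+1}$ is chosen so that $\operatorname{Im}(\overline{u_k}u_{k+1})$ has the same sign as $\operatorname{Im}(\overline{z_k}z_{k+1})$. Write $u_k=a_k+i b_k$ and $\bar a=(a_1,a_2,a_3,a_4)$, $\bar b=(b_1,b_2,b_3,b_4)$; these are orthonormal in $\mathbb{R}^4$. Let $\Pi=\operatorname{span}(\bar a,\bar b)$ and $\Pi^\perp$ its orthogonal complement. Dual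 quadrangle: choose an orthonormal basis $(\bar c,\bar d)$ of $\Pi^\perp$, put $w_k=(c_k+i d_k)^2$; then $\sum_k w_k=0$ and $\sum_k|w_k|=2$. The dual quadrangle $Q^\circ=KLMN$ is the quadrangle with $L-K=w_1$, $M-L=w_2$, $N-M=w_3$, $K-N=w_4$. It is determined up to rotation, reflection and translation. *)

(* classical reals. C is identified with R^2 = R * R. *)
From Stdlib Require Import Reals.
Open Scope R_scope.

Definition pt : Type := (R * R)%type.

Definition padd (p q : pt) : pt := (fst p + fst q, snd p + snd q).
Definition psub (p q : pt) : pt := (fst p - fst q, snd p - snd q).
Definition pscale (s : R) (p : pt) : pt := (s * fst p, s * snd p).
Definition pzero : pt := (0, 0).
Definition pnorm (p : pt) : R := sqrt (fst p ^ 2 + snd p ^ 2).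

(* cross p q = Im (conj p * q) *)
Definition cross (p q : pt) : R := fst p * snd q - snd p * fst q.

Definition csq (u : pt) : pt := (fst u ^ 2 - snd u ^ 2, 2 * fst u * snd u).

Definition z1 (A B C D : pt) : pt := psub B A.
Definition z2 (A B C D : pt) : pt := psub C B.
Definition z3 (A B C D : pt) : pt := psub D C.
Definition z4 (A B C D : pt) : pt := psub A D.

Definition perimeter (A B C D : pt) : R :=
  pnorm (z1 A B C D) + pnorm (z2 A B C D) + pnorm (z3 A B C D) + pnorm (z4 A B C D).

Definition good_pair (p q : pt) : Prop := p <> pzero /\ q <> pzero /\ cross p q <> 0.

Definition nondegenerate (A B C D : pt) : Prop :=
  good_pair (z1 A B C D) (z2 A B C D) /\ good_pair (z2 A B C D) (z3 A B C D) /\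
  good_pair (z3 A B C D) (z4 A B C D) /\ good_pair (z4 A B C D) (z1 A B C D).

Definition segments_intersect (P Q R' S : pt) : Prop :=
  exists s t : R, 0 <= s <= 1 /\ 0 <= t <= 1 /\
    padd P (pscale s (psub Q P)) = padd R' (pscale t (psub S R')).

Definition self_intersecting (A B C D : pt) : Prop :=
  nondegenerate A B C D /\
  (segments_intersect A B C D \/ segments_intersect B C D A).

(* signed area (shoelace); positive iff the traversal is counterclockwise *)
Definition signed_area (A B C D : pt) : R :=
  (cross A B + cross B C + cross C D + cross D A) / 2.

(* For a simple (non-self-intersecting) quadrangle the interior lies to the
   left of the traversal if signed_area > 0 and to the right if < 0; the
   interior angle at the vertex between edges z_k, z_(k+1) is < pi iff the
   turn from z_k to z_(k+1) is in the direction of the orientation. *)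
Definition interior_angles_lt_pi (A B C D : pt) : Prop :=
  let S := signed_area A B C D in
  cross (z1 A B C D) (z2 A B C D) * S > 0 /\
  cross (z2 A B C D) (z3 A B C D) * S > 0 /\
  cross (z3 A B C D) (z4 A B C D) * S > 0 /\
  cross (z4 A B C D) (z1 A B C D) * S > 0.

Definition convex (A B C D : pt) : Prop :=
  nondegenerate A B C D /\ ~ self_intersecting A B C D /\
  interior_angles_lt_pi A B C D.

(* Admissible choice of square roots u_k of the edge vectors z_k:
   u_k^2 = z_k, u_1 arbitrary, and for k = 1,2,3
   Im(conj u_k u_(k+1)) has the same sign as Im(conj z_k z_(k+1)). *)
Definition same_sign (x y : R) : Prop := (x > 0 /\ y > 0) \/ (x < 0 /\ y < 0) \/ (x = 0 /\ y = 0).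

Definition sqrt_choice (A B C D u1 u2 u3 u4 : pt) : Prop :=
  csq u1 = z1 A B C D /\ csq u2 = z2 A B C D /\
  csq u3 = z3 A B C D /\ csq u4 = z4 A B C D /\
  same_sign (cross u1 u2) (cross (z1 A B C D) (z2 A B C D)) /\
  same_sign (cross u2 u3) (cross (z2 A B C D) (z3 A B C D)) /\
  same_sign (cross u3 u4) (cross (z3 A B C D) (z4 A B C D)).

(* With u_k = a_k + i b_k, a = (a_k), b = (b_k); with v_k = (c_k, d_k),
   c = (c_k), d = (d_k).  perp_basis says (c, d) is an orthonormal basis of
   the orthogonal complement of span(a, b) in R^4 (orthonormal + orthogonal to
   a and b; since a, b are orthonormal this complement is 2-dimensional). *)
Definition dot4 (x1 x2 x3 x4 y1 y2 y3 y4 : R) : R := x1*y1 + x2*y2 + x3*y3 + x4*y4.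

Definition perp_basis (u1 u2 u3 u4 v1 v2 v3 v4 : pt) : Prop :=
  let a1 := fst u1 in let a2 := fst u2 in let a3 := fst u3 in let a4 := fst u4 in
  let b1 := snd u1 in let b2 := snd u2 in let b3 := snd u3 in let b4 := snd u4 in
  let c1 := fst v1 in let c2 := fst v2 in let c3 := fst v3 in let c4 := fst v4 in
  let d1 := snd v1 in let d2 := snd v2 in let d3 := snd v3 in let d4 := snd v4 in
  dot4 c1 c2 c3 c4 c1 c2 c3 c4 = 1 /\
  dot4 d1 d2 d3 d4 d1 d2 d3 d4 = 1 /\
  dot4 c1 c2 c3 c4 d1 d2 d3 d4 = 0 /\
  dot4 c1 c2 c3 c4 a1 a2 a3 a4 = 0 /\
  dot4 c1 c2 c3 c4 b1 b2 b3 b4 = 0 /\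
  dot4 d1 d2 d3 d4 a1 a2 a3 a4 = 0 /\
  dot4 d1 d2 d3 d4 b1 b2 b3 b4 = 0.

(* KLMN is a dual quadrangle of ABCD: it has edge vectors w_k = (c_k + i d_k)^2
   for some admissible choice of u_k and some orthonormal basis (c,d) of the
   complement. *)
Definition dual_edges (K L M N v1 v2 v3 v4 : pt) : Prop :=
  psub L K = csq v1 /\ psub M L = csq v2 /\ psub N M = csq v3 /\ psub K N = csq v4.

(* Write u_k = a_k + i b_k. Closure of Q and perimeter 2 say exactly that a and b are
   orthonormal in R^4, so (a, b, c, d) is an orthonormal frame, with determinant E = ±1.
   Orthogonality of its columns gives Re(conj v_k v_(k+1)) = - Re(conj u_k u_(k+1)), and
   Jacobi's complementary minors give Im(conj u_(k+2) u_(k+3)) = ± E Im(conj v_k v_(k+1)).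
   The turn cross(z_k, z_(k+1)) of Q is 2 Re Im (conj u_k u_(k+1)); convexity of Q and the
   sign convention on the u_k force the first three products conj u_k u_(k+1) into the
   right half-plane and the last one into the left, and then every turn of the dual
   quadrangle has the sign of - E * area(Q). *)

From Stdlib Require Import Reals Lra Psatz.
Open Scope R_scope.

Record vec4 : Type := V4 { x1 : R; x2 : R; x3 : R; x4 : R }.

Definition dot (p q : vec4) : R := dot4 (x1 p) (x2 p) (x3 p) (x4 p) (x1 q) (x2 q) (x3 q) (x4 q).

Definition det3 (a11 a12 a13 a21 a22 a23 a31 a32 a33 : R) : R :=
  a11 * (a22 * a33 - a23 * a32) - a12 * (a21 * a33 - a23 * a31)
  + a13 * (a21 * a32 - a22 * a31).

Definition det (p q r s : vec4) : R :=
  x1 p * det3 (x2 q) (x3 q) (x4 q) (x2 r) (x3 r) (x4 r) (x2 s) (x3 s) (x4 s)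
  - x2 p * det3 (x1 q) (x3 q) (x4 q) (x1 r) (x3 r) (x4 r) (x1 s) (x3 s) (x4 s)
  + x3 p * det3 (x1 q) (x2 q) (x4 q) (x1 r) (x2 r) (x4 r) (x1 s) (x2 s) (x4 s)
  - x4 p * det3 (x1 q) (x2 q) (x3 q) (x1 r) (x2 r) (x3 r) (x1 s) (x2 s) (x3 s).

Definition gram_row (r s1 s2 s3 s4 : vec4) : vec4 :=
  V4 (dot r s1) (dot r s2) (dot r s3) (dot r s4).

Lemma dot_comm p q : dot p q = dot q p.
Proof. unfold dot, dot4; ring. Qed.

Lemma det_gram r1 r2 r3 r4 s1 s2 s3 s4 :
  det (gram_row r1 s1 s2 s3 s4) (gram_row r2 s1 s2 s3 s4)
      (gram_row r3 s1 s2 s3 s4) (gram_row r4 s1 s2 s3 s4)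
  = det r1 r2 r3 r4 * det s1 s2 s3 s4.
Proof.
  destruct r1, r2, r3, r4, s1, s2, s3, s4.
  unfold det, det3, gram_row, dot, dot4; cbn; ring.
Qed.

Lemma cramer_dot a b c d x y :
  det x b c d * dot a y + det a x c d * dot b y
  + det a b x d * dot c y + det a b c x * dot d y = det a b c d * dot x y.
Proof. destruct a, b, c, d, x, y; unfold det, det3, dot, dot4; cbn; ring. Qed.

Definition orthonormal (a b c d : vec4) : Prop :=
  dot a a = 1 /\ dot b b = 1 /\ dot c c = 1 /\ dot d d = 1 /\
  dot a b = 0 /\ dot a c = 0 /\ dot a d = 0 /\
  dot b c = 0 /\ dot b d = 0 /\ dot c d = 0.

Section OrthonormalFrame.

Variables a b c d : vec4.
Hypothesis frame : orthonormal a b c d.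

(* Each identity below is [det_gram] for the frame against a second family whose Gram
   matrix with the frame is the identity except in one or two columns. *)
Ltac gram_of_frame s1 s2 s3 s4 :=
  let G := fresh "G" in
  pose proof (det_gram a b c d s1 s2 s3 s4) as G;
  destruct frame as (Haa & Hbb & Hcc & Hdd & Hab & Hac & Had & Hbc & Hbd & Hcd);
  unfold gram_row in G;
  rewrite ?(dot_comm b a), ?(dot_comm c a), ?(dot_comm d a), ?(dot_comm c b),
    ?(dot_comm d b), ?(dot_comm d c),
    ?Haa, ?Hbb, ?Hcc, ?Hdd, ?Hab, ?Hac, ?Had, ?Hbc, ?Hbd, ?Hcd in G;
  unfold det at 1, det3 in G; cbn [x1 x2 x3 x4] in G;
  rewrite <- G; ring.

Lemma det_frame_sqr : det a b c d * det a b c d = 1.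
Proof. gram_of_frame a b c d. Qed.

Lemma dot_frame_cofactor x :
  dot a x = det a b c d * det x b c d /\ dot b x = det a b c d * det a x c d /\
  dot c x = det a b c d * det a b x d /\ dot d x = det a b c d * det a b c x.
Proof.
  repeat split; [gram_of_frame x b c d | gram_of_frame a x c d
               | gram_of_frame a b x d | gram_of_frame a b c x].
Qed.

Lemma frame_parseval x y :
  dot x y = dot a x * dot a y + dot b x * dot b y + dot c x * dot c y + dot d x * dot d y.
Proof.
  destruct (dot_frame_cofactor x) as (ha & hb & hc & hd).
  rewrite ha, hb, hc, hd.
  transitivity (det a b c d * det a b c d * dot x y);
    [rewrite det_frame_sqr; ring | rewrite Rmult_assoc, <- cramer_dot; ring].
Qed.

Lemma frame_minor x y :
  dot a x * dot b y - dot a y * dot b x = det a b c d * det x y c d.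
Proof. gram_of_frame x y c d. Qed.

End OrthonormalFrame.

Lemma mul_pos_of_common_factor x y T : x * T > 0 -> y * T > 0 -> x * y > 0.
Proof.
  intros hx hy; destruct (Rlt_le_dec 0 T) as [hT | hT].
  - assert (x > 0) by nra; assert (y > 0) by nra; nra.
  - assert (x < 0) by nra; assert (y < 0) by nra; nra.
Qed.

Lemma good_pair_of_turn p q T : cross p q * T > 0 -> good_pair p q.
Proof.
  destruct p as [p1 p2], q as [q1 q2]; unfold good_pair, cross, pzero; cbn; intros h.
  repeat split; intros e; [injection e as -> -> | injection e as -> -> | rewrite e in h]; lra.
Qed.

Lemma segments_disjoint_of_same_side P Q R' S T :
  cross (psub Q P) (psub R' P) * T > 0 -> cross (psub Q P) (psub S P) * T > 0 ->
  ~ segments_intersect P Q R' S.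
Proof.
  intros hR hS (s & t & hs & ht & e).
  assert (hx : fst P + s * (fst Q - fst P) = fst R' + t * (fst S - fst R'))
    by exact (f_equal fst e).
  assert (hy : snd P + s * (snd Q - snd P) = snd R' + t * (snd S - snd R'))
    by exact (f_equal snd e).
  (* Both sides equal cross(Q - P, X - P) for the common point X, which lies on line PQ. *)
  assert (hcomb : (1 - t) * cross (psub Q P) (psub R' P) + t * cross (psub Q P) (psub S P) = 0).
  { transitivity ((fst Q - fst P) * (snd R' + t * (snd S - snd R') - snd P)
                   - (snd Q - snd P) * (fst R' + t * (fst S - fst R') - fst P)).
    - unfold cross, psub; cbn; ring.
    - rewrite <- hx, <- hy; ring. }
  set (X := cross (psub Q P) (psub R' P)) in *; set (Y := cross (psub Q P) (psub S P)) in *.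
  assert (h0 : (1 - t) * (X * T) + t * (Y * T) = 0) by (rewrite <- (Rmult_0_l T), <- hcomb; ring).
  destruct (Req_dec t 0) as [-> | ht0]; [lra | nra].
Qed.

Lemma signed_area_turns A B C D :
  signed_area A B C D = (cross (z1 A B C D) (z2 A B C D) + cross (z3 A B C D) (z4 A B C D)) / 2.
Proof. unfold signed_area, z1, z2, z3, z4, psub, cross; cbn; field. Qed.

Lemma convex_of_turns A B C D T :
  cross (z1 A B C D) (z2 A B C D) * T > 0 -> cross (z2 A B C D) (z3 A B C D) * T > 0 ->
  cross (z3 A B C D) (z4 A B C D) * T > 0 -> cross (z4 A B C D) (z1 A B C D) * T > 0 ->
  convex A B C D.
Proof.
  intros h1 h2 h3 h4.
  split; [|split].
  - repeat split; eapply good_pair_of_turn; eassumption.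
  - intros [_ [hAB | hBC]].
    + revert hAB; apply (segments_disjoint_of_same_side A B C D T).
      * replace (cross (psub B A) (psub C A)) with (cross (z1 A B C D) (z2 A B C D))
          by (unfold z1, z2, psub, cross; cbn; ring); exact h1.
      * replace (cross (psub B A) (psub D A)) with (cross (z4 A B C D) (z1 A B C D))
          by (unfold z1, z4, psub, cross; cbn; ring); exact h4.
    + revert hBC; apply (segments_disjoint_of_same_side B C D A T).
      * replace (cross (psub C B) (psub D B)) with (cross (z2 A B C D) (z3 A B C D))
          by (unfold z2, z3, psub, cross; cbn; ring); exact h2.
      * replace (cross (psub C B) (psub A B)) with (cross (z1 A B C D) (z2 A B C D))
          by (unfold z1, z2, psub, cross; cbn; ring); exact h1.
  - unfold interior_angles_lt_pi; rewrite signed_area_turns.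
    assert (hS : (cross (z1 A B C D) (z2 A B C D) + cross (z3 A B C D) (z4 A B C D)) / 2 * T > 0)
      by lra.
    repeat split; eapply mul_pos_of_common_factor; eassumption.
Qed.

Definition pdot (p q : pt) : R := fst p * fst q + snd p * snd q.

Definition fsts (p1 p2 p3 p4 : pt) : vec4 := V4 (fst p1) (fst p2) (fst p3) (fst p4).
Definition snds (p1 p2 p3 p4 : pt) : vec4 := V4 (snd p1) (snd p2) (snd p3) (snd p4).

Lemma cross_csq u v : cross (csq u) (csq v) = 2 * pdot u v * cross u v.
Proof. unfold cross, csq, pdot; cbn; ring. Qed.

Lemma pnorm_csq u : pnorm (csq u) = pdot u u.
Proof.
  unfold pnorm, csq, pdot; cbn [fst snd].
  replace ((fst u ^ 2 - snd u ^ 2) ^ 2 + (2 * fst u * snd u) ^ 2)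
    with ((fst u * fst u + snd u * snd u) ^ 2) by ring.
  apply sqrt_pow2; nra.
Qed.

Lemma cross_chain u v w :
  pdot v v * cross u w = pdot u v * cross v w + cross u v * pdot v w.
Proof. unfold pdot, cross; ring. Qed.

Lemma edges_close A B C D :
  fst (z1 A B C D) + fst (z2 A B C D) + fst (z3 A B C D) + fst (z4 A B C D) = 0 /\
  snd (z1 A B C D) + snd (z2 A B C D) + snd (z3 A B C D) + snd (z4 A B C D) = 0.
Proof. unfold z1, z2, z3, z4, psub; cbn; split; ring. Qed.

Lemma frame_of_square_roots u1 u2 u3 u4 v1 v2 v3 v4 :
  fst (csq u1) + fst (csq u2) + fst (csq u3) + fst (csq u4) = 0 ->
  snd (csq u1) + snd (csq u2) + snd (csq u3) + snd (csq u4) = 0 ->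
  pdot u1 u1 + pdot u2 u2 + pdot u3 u3 + pdot u4 u4 = 2 ->
  perp_basis u1 u2 u3 u4 v1 v2 v3 v4 ->
  orthonormal (fsts u1 u2 u3 u4) (snds u1 u2 u3 u4) (fsts v1 v2 v3 v4) (snds v1 v2 v3 v4).
Proof.
  unfold perp_basis, orthonormal, fsts, snds, dot, csq, pdot, dot4; cbn.
  intros hre him hnorm (? & ? & ? & ? & ? & ? & ?).
  repeat split; nra.
Qed.

(* E is the determinant (±1) of the frame; the cross identities are Jacobi's
   complementary minors, the pdot identities orthogonality of columns. *)
Lemma dual_turns u1 u2 u3 u4 v1 v2 v3 v4 :
  orthonormal (fsts u1 u2 u3 u4) (snds u1 u2 u3 u4) (fsts v1 v2 v3 v4) (snds v1 v2 v3 v4) ->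
  exists E,
    pdot v1 v2 = - pdot u1 u2 /\ pdot v2 v3 = - pdot u2 u3 /\
    pdot v3 v4 = - pdot u3 u4 /\ pdot v4 v1 = - pdot u4 u1 /\
    cross u3 u4 = E * cross v1 v2 /\ cross u4 u1 = - E * cross v2 v3 /\
    cross u1 u2 = E * cross v3 v4 /\ cross u2 u3 = - E * cross v4 v1.
Proof.
  intros frame.
  pose (e1 := V4 1 0 0 0); pose (e2 := V4 0 1 0 0);
  pose (e3 := V4 0 0 1 0); pose (e4 := V4 0 0 0 1).
  pose proof (frame_parseval _ _ _ _ frame e1 e2) as p12.
  pose proof (frame_parseval _ _ _ _ frame e2 e3) as p23.
  pose proof (frame_parseval _ _ _ _ frame e3 e4) as p34.
  pose proof (frame_parseval _ _ _ _ frame e4 e1) as p41.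
  pose proof (frame_minor _ _ _ _ frame e3 e4) as m34.
  pose proof (frame_minor _ _ _ _ frame e4 e1) as m41.
  pose proof (frame_minor _ _ _ _ frame e1 e2) as m12.
  pose proof (frame_minor _ _ _ _ frame e2 e3) as m23.
  set (E := det (fsts u1 u2 u3 u4) (snds u1 u2 u3 u4) (fsts v1 v2 v3 v4) (snds v1 v2 v3 v4)) in *.
  clearbody E; exists E.
  unfold e1, e2, e3, e4, fsts, snds, dot, det, det3, dot4 in *; cbn in *.
  unfold pdot, cross.
  repeat split; lra.
Qed.

Lemma admissible_turn_pos P Q S :
  same_sign Q (2 * P * Q) -> 2 * P * Q * S > 0 -> P > 0 /\ Q * S > 0.
Proof.
  intros [[hQ hPQ] | [[hQ hPQ] | [hQ _]]] h.
  - assert (P > 0) by nra; split; nra.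
  - assert (P > 0) by nra; split; nra.
  - subst; lra.
Qed.

Lemma closing_turn_obtuse u1 u2 u3 u4 S :
  pdot u1 u2 > 0 -> pdot u2 u3 > 0 -> pdot u3 u4 > 0 ->
  cross u1 u2 * S > 0 -> cross u2 u3 * S > 0 -> cross u3 u4 * S > 0 ->
  2 * pdot u4 u1 * cross u4 u1 * S > 0 -> pdot u4 u1 < 0.
Proof.
  intros p1 p2 p3 q1 q2 q3 h4.
  destruct (Rlt_le_dec (pdot u4 u1) 0) as [| p4]; [assumption | exfalso].
  (* Otherwise cross_chain through u2 and through u4 gives cross u1 u3 and cross u3 u1
     the same sign as S. *)
  assert (q4 : cross u4 u1 * S > 0) by nra.
  assert (h13 : pdot u2 u2 * (cross u1 u3 * S) > 0)
    by (rewrite <- Rmult_assoc, cross_chain; nra).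
  assert (h31 : pdot u4 u4 * (cross u3 u1 * S) > 0)
    by (rewrite <- Rmult_assoc, cross_chain; nra).
  assert (pdot u2 u2 >= 0) by (unfold pdot; nra).
  assert (pdot u4 u4 >= 0) by (unfold pdot; nra).
  replace (cross u3 u1) with (- cross u1 u3) in h31 by (unfold cross; ring).
  destruct (Rle_lt_dec (cross u1 u3 * S) 0); nra.
Qed.

Theorem corollary5p1 :
  forall A B C D : pt,
    convex A B C D ->
    perimeter A B C D = 2 ->
    forall u1 u2 u3 u4 : pt, sqrt_choice A B C D u1 u2 u3 u4 ->
    forall v1 v2 v3 v4 : pt, perp_basis u1 u2 u3 u4 v1 v2 v3 v4 ->
    forall K L M N : pt, dual_edges K L M N v1 v2 v3 v4 ->
    convex K L M N.
Proof.
  intros A B C D (_ & _ & hturns) hper u1 u2 u3 u4 (e1 & e2 & e3 & e4 & s1 & s2 & s3)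
    v1 v2 v3 v4 hperp K L M N (f1 & f2 & f3 & f4).
  destruct (edges_close A B C D) as [hre him].
  unfold perimeter, interior_angles_lt_pi in *.
  set (S := signed_area A B C D) in hturns.
  rewrite <- e1, <- e2, <- e3, <- e4, ?pnorm_csq, ?cross_csq in *.
  destruct hturns as (h1 & h2 & h3 & h4).
  destruct (dual_turns u1 u2 u3 u4 v1 v2 v3 v4
              (frame_of_square_roots u1 u2 u3 u4 v1 v2 v3 v4 hre him hper hperp))
    as (E & c12 & c23 & c34 & c41 & d34 & d41 & d12 & d23).
  destruct (admissible_turn_pos _ _ _ s1 h1) as [p1 q1].
  destruct (admissible_turn_pos _ _ _ s2 h2) as [p2 q2].
  destruct (admissible_turn_pos _ _ _ s3 h3) as [p3 q3].
  pose proof (closing_turn_obtuse u1 u2 u3 u4 S p1 p2 p3 q1 q2 q3 h4) as p4.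
  assert (q4 : cross u4 u1 * S < 0) by nra.
  apply (convex_of_turns K L M N (- (E * S)));
    unfold z1, z2, z3, z4; rewrite ?f1, ?f2, ?f3, ?f4, cross_csq, ?c12, ?c23, ?c34, ?c41;
    rewrite ?d34, ?d41, ?d12, ?d23 in *; nra.
Qed.
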